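(* Let $(\mathfrak g,\mathfrak g_1,\mathfrak g_2)$ be a quasi-double Lie algebra with maps $\psi,\mu$, and for $x\in\mathfrak g_2$, $\xi\in\mathfrak g_1$ let $x^\xi\in\mathfrak g_2$ denote the $\mathfrak g_2$-component of $[x,\xi]_{\mathfrak g}$ in the decomposition $\mathfrak g=\mathfrak g_1\oplus\mathfrak g_2$. Define $[x,y]_{\mathfrak g_2}=\mu(x,y)$ and $\langle x,y,z\rangle=\frac12\,x^{\psi(y,z)}$ for $x,y,z\in\mathfrak g_2$. Then $(\mathfrak g_2,[\cdot,\cdot]_{\mathfrak g_2},\langle\cdot,\cdot,\cdot\rangle)$ is an Akivis algebra.
   Context: A quasi-double Lie algebra is a triple $(\mathfrak g,\mathfrak g_1,\mathfrak g_2)$ where $\mathfrak g$ is a Lie algebra, $\mathfrak g_1$ a Lie subalgebra, and $\mathfrak g_2$ a linear subspace equipped with antisymmetric bilinear maps $\psi:\Lambda^2\mathfrak g_2\to\mathfrak g_1$, $\mu:\Lambda^2\mathfrak g_2\to\mathfrak g_2$ such that $\mathfrak g=\mathfrak g_1\oplus\mathfrak g_2$ as vector spaces and $[x,y]_{\mathfrak g}=\psi(x,y)+\mu(x,y)$ for all $x,y\in\mathfrak g_2$. An Akivis algebra $(A,[\cdot,\cdot],\langle\cdot,\cdot,\cdot\rangle)$ is a vector space $A$ with an antisymmetric bilinear map $[\cdot,\cdot]:A\times A\to A$ and a trilinear map $\langle\cdot,\cdot,\cdot\rangle:A\times A\times A\to A$ such that $\sum_{\sigma\in S_3}\mathrm{sign}(\sigma)\langle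 x_{\sigma(1)},x_{\sigma(2)},x_{\sigma(3)}\rangle=\sum_{\circlearrowleft}[[x_1,x_2],x_3]$ for all $x_1,x_2,x_3\in A$, the right side being the sum over cyclic permutations of $(x_1,x_2,x_3)$. *)

From mathcomp Require Import all_boot all_algebra.
Set Implicit Arguments. Unset Strict Implicit. Unset Printing Implicit Defensive.
Import GRing.Theory.
Local Open Scope ring_scope.

Definition subspace (K : fieldType) (V : lmodType K) (A : {pred V}) : Prop :=
  0 \in A /\ (forall (a : K) (x y : V), x \in A -> y \in A -> a *: x + y \in A).

Definition bilinear_on (K : fieldType) (V : lmodType K) (A : {pred V})
    (f : V -> V -> V) : Prop :=
  (forall (a : K) (x y z : V), x \in A -> y \in A -> z \in A ->
      f (a *: x + y) z = a *: f x z + f y z) /\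
  (forall (a : K) (x y z : V), x \in A -> y \in A -> z \in A ->
      f z (a *: x + y) = a *: f z x + f z y).

Definition trilinear_on (K : fieldType) (V : lmodType K) (A : {pred V})
    (f : V -> V -> V -> V) : Prop :=
  (forall (a : K) (x y u v : V), x \in A -> y \in A -> u \in A -> v \in A ->
      f (a *: x + y) u v = a *: f x u v + f y u v) /\
  (forall (a : K) (x y u v : V), x \in A -> y \in A -> u \in A -> v \in A ->
      f u (a *: x + y) v = a *: f u x v + f u y v) /\
  (forall (a : K) (x y u v : V), x \in A -> y \in A -> u \in A -> v \in A ->
      f u v (a *: x + y) = a *: f u v x + f u v y).

Definition lie_algebra (K : fieldType) (V : lmodType K) (br : V -> V -> V) : Prop :=
  bilinear_on [pred _ : V | true] br /\
  (forall x, br x x = 0) /\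
  (forall x y z, br x (br y z) + br y (br z x) + br z (br x y) = 0).

(* Quasi-double Lie algebra (g, g1, g2) with maps psi, mu
   (psi, mu : Lambda^2 g2 -> g1, g2 are modelled as functions V -> V -> V,
   only their values on g2 matter). *)
Definition quasi_double (K : fieldType) (V : lmodType K) (br : V -> V -> V)
    (g1 g2 : {pred V}) (psi mu : V -> V -> V) : Prop :=
  [/\ lie_algebra br,
      subspace g1 /\ (forall x y, x \in g1 -> y \in g1 -> br x y \in g1),
      subspace g2,
      (forall v, exists a b, [/\ a \in g1, b \in g2 & v = a + b]) /\
      (forall v, v \in g1 -> v \in g2 -> v = 0) &
      [/\ forall x y, x \in g2 -> y \in g2 -> psi x y \in g1 /\ mu x y \in g2,
          bilinear_on g2 psi /\ bilinear_on g2 mu,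
          forall x, x \in g2 -> psi x x = 0 /\ mu x x = 0 &
          forall x y, x \in g2 -> y \in g2 -> br x y = psi x y + mu x y]].

Definition akivis (K : fieldType) (V : lmodType K) (A : {pred V})
    (br : V -> V -> V) (tri : V -> V -> V -> V) : Prop :=
  [/\ forall x y, x \in A -> y \in A -> br x y \in A,
      forall x y z, x \in A -> y \in A -> z \in A -> tri x y z \in A,
      bilinear_on A br /\ (forall x y, x \in A -> y \in A -> br x y = - br y x),
      trilinear_on A tri &
      forall x1 x2 x3, x1 \in A -> x2 \in A -> x3 \in A ->
        tri x1 x2 x3 + tri x2 x3 x1 + tri x3 x1 x2
        - tri x2 x1 x3 - tri x3 x2 x1 - tri x1 x3 x2
        = br (br x1 x2) x3 + br (br x2 x3) x1 + br (br x3 x1) x2].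

(* Write v^g2 for the g2-component of v.  For x, y, z in g2 the g2-component of
   [z, mu(x, y)] = psi(z, mu(x, y)) + mu(z, mu(x, y)) is -mu(mu(x, y), z), so
   splitting [x, y] = psi(x, y) + mu(x, y) gives
     [z, psi(x, y)]^g2 = mu(mu(x, y), z) + [z, [x, y]]^g2.
   Summed cyclically, the Jacobi identity of g kills the last terms: the cyclic
   sum of mu(mu(x, y), z) equals the cyclic sum of x^psi(y, z).  By antisymmetry
   of psi, the alternating sum of <x, y, z> consists of two copies of each
   (1/2) x^psi(y, z), hence is that same cyclic sum. *)

From HB Require Import structures.
From mathcomp Require Import all_boot all_algebra.

Set Implicit Arguments.
Unset Strict Implicit.
Unset Printing Implicit Defensive.

Import GRing.Theory.
Local Open Scope ring_scope.

Section LinearOn.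

Variables (K : fieldType) (V W : lmodType K) (A : {pred V}) (g : V -> W).
Hypothesis A0 : 0 \in A.
Hypothesis gL : forall a x y, x \in A -> y \in A -> g (a *: x + y) = a *: g x + g y.

Lemma linear_on0 : g 0 = 0.
Proof.
by move/esym: (gL 1 A0 A0); rewrite !scale1r addr0 -{3}[g 0]addr0 => /addrI.
Qed.

Lemma linear_onZ a : {in A, forall x, g (a *: x) = a *: g x}.
Proof. by move=> x Ax; rewrite -[a *: x]addr0 gL // linear_on0 addr0. Qed.

Lemma linear_onD : {in A &, {morph g : x y / x + y}}.
Proof. by move=> x y Ax Ay /=; rewrite -{1}[x]scale1r gL // scale1r. Qed.

Lemma linear_onN : {in A, {morph g : x / - x}}.
Proof. by move=> x Ax; rewrite -scaleN1r linear_onZ // scaleN1r. Qed.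

End LinearOn.

Lemma scale_half_addr (K : fieldType) (V : lmodType K) (v : V) :
  (2%:R : K) != 0 -> (2%:R : K)^-1 *: v + (2%:R : K)^-1 *: v = v.
Proof.
by move=> two_neq0; rewrite -scalerDl -mulr2n -[_ *+ 2]mulr_natr mulVf ?scale1r.
Qed.

Section AlternatingBilinear.

Variables (K : fieldType) (V : lmodType K) (A : {pred V}) (f : V -> V -> V).
Hypothesis A_subspace : subspace A.
HB.instance Definition _ := GRing.isSubmodClosed.Build K V A
  (GRing.submod_closed_semi A_subspace).

Lemma bilinear_on_alt_antisym :
  bilinear_on A f -> {in A, forall x, f x x = 0} -> {in A &, forall x y, f x y = - f y x}.
Proof.
move=> [fL fR] f_alt x y Ax Ay; have Axy : x + y \in A by rewrite rpredD.
have fDl z : z \in A -> {in A &, {morph f^~ z : u v / u + v}}.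
  by move=> Az; apply: (linear_onD (g := f^~ z)) => a u v Au Av; apply: fL.
have fDr z : z \in A -> {in A &, {morph f z : u v / u + v}}.
  by move=> Az; apply: (linear_onD (g := f z)) => a u v Au Av; apply: fR.
apply/eqP; rewrite -addr_eq0; apply/eqP.
by have := f_alt _ Axy; rewrite fDl // !fDr // !f_alt // add0r addr0.
Qed.

End AlternatingBilinear.

Section Projection.

Variables (K : fieldType) (V : lmodType K) (g1 g2 : {pred V}) (pr2 : V -> V).
Hypotheses (g1_subspace : subspace g1) (g2_subspace : subspace g2).
Hypothesis g1_g2_trivial : forall v, v \in g1 -> v \in g2 -> v = 0.
Hypothesis pr2_spec : forall v, pr2 v \in g2 /\ v - pr2 v \in g1.

HB.instance Definition _ := GRing.isSubmodClosed.Build K V g1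
  (GRing.submod_closed_semi g1_subspace).
HB.instance Definition _ := GRing.isSubmodClosed.Build K V g2
  (GRing.submod_closed_semi g2_subspace).

Lemma pr2_unique v p : p \in g2 -> v - p \in g1 -> pr2 v = p.
Proof.
move=> g2p g1vp; have [g2pv g1vpv] := pr2_spec v.
apply/eqP; rewrite -subr_eq0; apply/eqP/g1_g2_trivial; last by rewrite rpredB.
have -> : pr2 v - p = (v - p) - (v - pr2 v) by rewrite opprB [RHS]addrC subrKA.
by rewrite rpredB.
Qed.

Lemma pr2_id : {in g2, forall x, pr2 x = x}.
Proof. by move=> x g2x; apply: pr2_unique; rewrite ?subrr ?rpred0. Qed.

Lemma pr2_eq0 : {in g1, forall x, pr2 x = 0}.
Proof. by move=> x g1x; apply: pr2_unique; rewrite ?subr0 ?rpred0. Qed.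

Lemma pr2D : {morph pr2 : u v / u + v}.
Proof.
move=> u v; have [g2u g1u] := pr2_spec u; have [g2v g1v] := pr2_spec v.
by apply: pr2_unique; [rewrite rpredD | rewrite opprD addrACA rpredD].
Qed.

Lemma pr2Z a : {morph pr2 : u / a *: u}.
Proof.
move=> u; have [g2u g1u] := pr2_spec u.
by apply: pr2_unique; [rewrite rpredZ | rewrite -scalerBr rpredZ].
Qed.

Lemma pr2N : {morph pr2 : u / - u}.
Proof. by move=> u; rewrite -scaleN1r pr2Z scaleN1r. Qed.

Lemma scale_pr2_in a v : a *: pr2 v \in g2.
Proof. by rewrite rpredZ //; case: (pr2_spec v). Qed.

End Projection.

Section QuasiDouble.

Variables (K : fieldType) (V : lmodType K) (br : V -> V -> V).
Variables (g1 g2 : {pred V}) (psi mu : V -> V -> V) (pr2 : V -> V).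
Hypothesis qd : quasi_double br g1 g2 psi mu.
Hypothesis pr2_spec : forall v, pr2 v \in g2 /\ v - pr2 v \in g1.

Let brPl a x y z : br (a *: x + y) z = a *: br x z + br y z.
Proof. by case: qd => [[[brL _] _]] *; apply: brL. Qed.
Let brPr a x y z : br z (a *: x + y) = a *: br z x + br z y.
Proof. by case: qd => [[[_ brR] _]] *; apply: brR. Qed.
Let jacobi x y z : br x (br y z) + br y (br z x) + br z (br x y) = 0.
Proof. by case: qd => [[_ []]]. Qed.
Let g1_subspace : subspace g1. Proof. by case: qd => _ []. Qed.
Let g2_subspace : subspace g2. Proof. by case: qd. Qed.
Let g1_g2_trivial v : v \in g1 -> v \in g2 -> v = 0.
Proof. by case: qd => _ _ _ [_ triv] _; apply: triv. Qed.
Let psi_mu_in x y : x \in g2 -> y \in g2 -> psi x y \in g1 /\ mu x y \in g2.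
Proof. by case: qd => _ _ _ _ [in_g _ _ _]; apply: in_g. Qed.
Let psi_bilinear : bilinear_on g2 psi. Proof. by case: qd => _ _ _ _ [_ []]. Qed.
Let mu_bilinear : bilinear_on g2 mu. Proof. by case: qd => _ _ _ _ [_ []]. Qed.
Let psi_mu_alt x : x \in g2 -> psi x x = 0 /\ mu x x = 0.
Proof. by case: qd => _ _ _ _ [_ _ alt _]; apply: alt. Qed.
Let br_split x y : x \in g2 -> y \in g2 -> br x y = psi x y + mu x y.
Proof. by case: qd => _ _ _ _ [_ _ _ split]; apply: split. Qed.

Let pr2_id := pr2_id g1_subspace g2_subspace g1_g2_trivial pr2_spec.
Let pr2_eq0 := pr2_eq0 g1_subspace g2_subspace g1_g2_trivial pr2_spec.
Let pr2D := pr2D g1_subspace g2_subspace g1_g2_trivial pr2_spec.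
Let pr2Z := pr2Z g1_subspace g2_subspace g1_g2_trivial pr2_spec.
Let pr2N := pr2N g1_subspace g2_subspace g1_g2_trivial pr2_spec.

Let brDr z : {morph br z : x y / x + y}.
Proof. by move=> x y; apply: (linear_onD (A := predT)). Qed.

Let brNr z : {morph br z : x / - x}.
Proof. by move=> x; apply: (linear_onN (A := predT)). Qed.

Lemma psi_antisym : {in g2 &, forall x y, psi x y = - psi y x}.
Proof. by apply: bilinear_on_alt_antisym => // x /psi_mu_alt[]. Qed.

Lemma mu_antisym : {in g2 &, forall x y, mu x y = - mu y x}.
Proof. by apply: bilinear_on_alt_antisym => // x /psi_mu_alt[]. Qed.

Lemma pr2_br_psi x y z : x \in g2 -> y \in g2 -> z \in g2 ->
  pr2 (br z (psi x y)) = mu (mu x y) z + pr2 (br z (br x y)).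
Proof.
move=> g2x g2y g2z; have [_ g2xy] := psi_mu_in g2x g2y.
have [g1zxy g2zxy] := psi_mu_in g2z g2xy.
rewrite (br_split g2x g2y) brDr pr2D (br_split g2z g2xy) pr2D (pr2_eq0 g1zxy) add0r.
by rewrite (pr2_id g2zxy) (mu_antisym g2z g2xy) subrKC.
Qed.

Lemma pr2_br_psi_cycle : {in g2 & &, forall x1 x2 x3,
  pr2 (br x3 (psi x1 x2)) + pr2 (br x1 (psi x2 x3)) + pr2 (br x2 (psi x3 x1))
  = mu (mu x1 x2) x3 + mu (mu x2 x3) x1 + mu (mu x3 x1) x2}.
Proof.
move=> x1 x2 x3 g2x1 g2x2 g2x3; rewrite !pr2_br_psi // !addrA.
rewrite (ACl ((1 * 3 * 5) * (2 * 4 * 6))%AC) /=.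
by rewrite -!pr2D jacobi pr2_eq0 ?addr0 //; case: g1_subspace.
Qed.

Lemma tri_trilinear c : trilinear_on g2 (fun x y z => c *: pr2 (br x (psi y z))).
Proof.
have [psiPl psiPr] := psi_bilinear.
split; [|split] => a x y u v g2x g2y g2u g2v.
- by rewrite brPl pr2D !pr2Z scalerDr !scalerA mulrC.
- by rewrite psiPl // brPr pr2D !pr2Z scalerDr !scalerA mulrC.
- by rewrite psiPr // brPr pr2D !pr2Z scalerDr !scalerA mulrC.
Qed.

Local Notation tri x y z := ((2%:R : K)^-1 *: pr2 (br x (psi y z))).

Lemma tri_alt_sum : (2%:R : K) != 0 -> {in g2 & &, forall x1 x2 x3,
  tri x1 x2 x3 + tri x2 x3 x1 + tri x3 x1 x2
    - tri x2 x1 x3 - tri x3 x2 x1 - tri x1 x3 x2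
  = mu (mu x1 x2) x3 + mu (mu x2 x3) x1 + mu (mu x3 x1) x2}.
Proof.
move=> two_neq0 x1 x2 x3 g2x1 g2x2 g2x3.
have tri_swap x y z : y \in g2 -> z \in g2 -> tri x z y = - tri x y z.
  by move=> g2y g2z; rewrite psi_antisym // brNr pr2N scalerN.
rewrite (tri_swap x2 x3 x1) // (tri_swap x3 x1 x2) // (tri_swap x1 x2 x3) // !opprK.
rewrite (ACl ((3 * 5) * (1 * 6) * (2 * 4))%AC) /= !scale_half_addr //.
exact: pr2_br_psi_cycle.
Qed.

End QuasiDouble.

Theorem mainTheorem4 (K : fieldType) (V : lmodType K) (br : V -> V -> V)
    (g1 g2 : {pred V}) (psi mu : V -> V -> V) (pr2 : V -> V) :
  (2%:R : K) != 0 ->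
  quasi_double br g1 g2 psi mu ->
  (* pr2 is the projection onto g2 along g1 *)
  (forall v, pr2 v \in g2 /\ v - pr2 v \in g1) ->
  akivis g2 mu (fun x y z => (2%:R : K)^-1 *: pr2 (br x (psi y z))).
Proof.
move=> two_neq0 qd pr2_spec.
have [_ _ g2_subspace _ [psi_mu_in [_ mu_bilinear] _ _]] := qd.
split.
- by move=> x y g2x g2y; have [] := psi_mu_in x y g2x g2y.
- by move=> x y z _ _ _; apply: scale_pr2_in g2_subspace pr2_spec _ _.
- by split; [exact: mu_bilinear | exact: mu_antisym qd].
- exact: (tri_trilinear qd pr2_spec (2%:R^-1)).
- exact: tri_alt_sum qd pr2_spec two_neq0.
Qed.
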